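(* Let $\mu$ be a signature consisting of a single ternary relation symbol. There is an $\aleph_1$-bounded ideal $\mathcal A$ of $\Omega^*_\mu$ which is not representable.
   Context: A relational structure of signature $\mu$ here is a pair $(A;T)$ with $T$ a ternary relation on the set $A$. An embedding is an injective map preserving and reflecting $T$; $\mathfrak A\le\mathfrak B$ means $\mathfrak A$ embeds into $\mathfrak B$. $\Omega^*_\mu$ is the class of isomorphism types of (arbitrary cardinality) relational structures of signature $\mu$, quasi-ordered by $\le$. An ideal of $\Omega^*_\mu$ is a non-empty set (not a proper class) of such isomorphism types which is downward closed under $\le$ and up-directed. An ideal $\mathcal A$ is $\kappa$-bounded if all its elements have cardinality less than $\kappa$ and for every cardinal $\lambda<\kappa$ there is an element of $\mathcal A$ of cardinality $\lambda$. An ideal $\mathcal J$ of subsets of a set $A$ is a non-empty family of subsets of $A$ that is closed under taking subsets and up-directed under inclusion. For a relational structure $\mathfrak A$ and an ideal $\mathcal J$ of subsets of $A$, $\mathrm{age}_{\mathcal J}(\mathfrak A)$ is the set of isomorphism types of the induced substructures $\mathfrak A_{\restriction S}$ for $S\in\mathcal J$. An ideal $\mathcal C$ of $\Omega^*_\mu$ is representable if there exist a relational structure $\mathfrak A$ of signature $\mu$ and an ideal $\mathcal J$ of subsets of $A$ with $\mathrm{age}_{\mathcal J}(\mathfrak A)=\mathcal C$. *)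

From Stdlib Require Import Arith.

Record tstruct : Type := TStruct {
  carrier :> Type;
  rel : carrier -> carrier -> carrier -> Prop
}.

Definition is_embedding (A B : tstruct) (f : A -> B) : Prop :=
  (forall x y, f x = f y -> x = y) /\
  (forall a b c, rel A a b c <-> rel B (f a) (f b) (f c)).

Definition embeds (A B : tstruct) : Prop := exists f : A -> B, is_embedding A B f.

Definition isomorphic (A B : tstruct) : Prop :=
  exists f : A -> B, is_embedding A B f /\ (forall y, exists x, f x = y).

(* A "set of isomorphism types" of Omega*_mu is modelled as a predicate on
   structures that is closed under isomorphism. *)
Definition iso_closed (C : tstruct -> Prop) : Prop :=
  forall A B, isomorphic A B -> C A -> C B.

Definition is_ideal (C : tstruct -> Prop) : Prop :=
  iso_closed C /\
  (exists A, C A) /\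
  (forall A B, embeds A B -> C B -> C A) /\
  (forall A B, C A -> C B -> exists D, C D /\ embeds A D /\ embeds B D).

Definition has_card_fin (X : Type) (n : nat) : Prop :=
  exists f : X -> {k : nat | k < n},
    (forall x y, f x = f y -> x = y) /\ (forall k, exists x, f x = k).

Definition countably_infinite (X : Type) : Prop :=
  exists f : X -> nat,
    (forall x y, f x = f y -> x = y) /\ (forall k, exists x, f x = k).

Definition card_lt_aleph1 (X : Type) : Prop :=
  exists f : X -> nat, forall x y, f x = f y -> x = y.

(* aleph_1-bounded: all elements have cardinality < aleph_1, and for every
   cardinal lambda < aleph_1 (i.e. every finite n, and aleph_0) there is an
   element of cardinality lambda. *)
Definition aleph1_bounded (C : tstruct -> Prop) : Prop :=
  (forall A, C A -> card_lt_aleph1 A) /\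
  (forall n : nat, exists A, C A /\ has_card_fin A n) /\
  (exists A, C A /\ countably_infinite A).

Definition is_set_ideal (X : Type) (J : (X -> Prop) -> Prop) : Prop :=
  (exists S, J S) /\
  (forall S S', (forall x, S' x -> S x) -> J S -> J S') /\
  (forall S1 S2, J S1 -> J S2 ->
     exists S3, J S3 /\ (forall x, S1 x -> S3 x) /\ (forall x, S2 x -> S3 x)).

Definition restrict (A : tstruct) (S : A -> Prop) : tstruct :=
  {| carrier := {x : A | S x};
     rel := fun a b c => rel A (proj1_sig a) (proj1_sig b) (proj1_sig c) |}.

Definition age_eq (A : tstruct) (J : (A -> Prop) -> Prop) (C : tstruct -> Prop) : Prop :=
  forall B, C B <-> exists S, J S /\ isomorphic B (restrict A S).

Definition representable (C : tstruct -> Prop) : Prop :=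
  exists (A : tstruct) (J : (A -> Prop) -> Prop), is_set_ideal A J /\ age_eq A J C.

From Stdlib Require Import Cantor Lia Bool ClassicalEpsilon ProofIrrelevance.

(* Take for the ideal the structures that embed into a coded structure: a spine
   (the naturals, made rigid by the triples (n, n, n+1) and (0, 1, 1)) together
   with countably many points i (marked by (i, i, i)), where a point codes a real
   r by the triples (n, i, n) for n in r, and each pair of distinct points (i, j)
   is labelled by a spine element c via (i, j, c), injectively in j.  Two coded
   structures amalgamate into their disjoint union, labelling the new pairs on a
   fresh level of the Cantor pairing; bounding the levels used keeps such a level
   free.

   If it were the age of M along an ideal J of subsets, then any two copies of
   coded structures in M would lie in a common member of J, which embeds into a
   coded structure.  By rigidity all copies share one spine, and once a point o is
   fixed, every other point x of a copy gets a label n with (o, x, n) in M that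
   determines x.  As every real is coded by a point of some copy, this injects
   the reals into the naturals, contradicting Cantor's theorem. *)

Lemma embeds_refl (A : tstruct) : embeds A A.
Proof. exists (fun x => x). split; [auto | intros; reflexivity]. Qed.

Lemma embeds_trans (A B D : tstruct) : embeds A B -> embeds B D -> embeds A D.
Proof.
  intros [f [f_inj f_rel]] [g [g_inj g_rel]]. exists (fun x => g (f x)). split.
  - intros x y E. apply f_inj, g_inj, E.
  - intros a b c. rewrite f_rel. apply g_rel.
Qed.

Lemma isomorphic_embeds_sym (A B : tstruct) : isomorphic A B -> embeds B A.
Proof.
  intros [f [[f_inj f_rel] f_surj]].
  destruct (choice (fun y x => f x = y) f_surj) as [g Hg].
  exists g. split.
  - intros x y E. rewrite <- (Hg x), <- (Hg y), E. reflexivity.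
  - intros a b c. rewrite (f_rel (g a) (g b) (g c)), !Hg. reflexivity.
Qed.

Lemma proj1_sig_inj (X : Type) (P : X -> Prop) (u v : {x | P x}) :
  proj1_sig u = proj1_sig v -> u = v.
Proof. apply eq_sig_hprop. intros; apply proof_irrelevance. Qed.

Lemma card_lt_aleph1_sum (X Y : Type) :
  card_lt_aleph1 X -> card_lt_aleph1 Y -> card_lt_aleph1 (X + Y).
Proof.
  intros [f f_inj] [g g_inj].
  exists (fun u => match u with inl x => 2 * f x | inr y => 2 * g y + 1 end).
  intros [x|y] [x'|y'] E; f_equal; [apply f_inj | | | apply g_inj]; lia.
Qed.

Lemma card_lt_aleph1_embeds (A B : tstruct) :
  embeds A B -> card_lt_aleph1 B -> card_lt_aleph1 A.
Proof.
  intros [e [e_inj _]] [f f_inj]. exists (fun x => f (e x)).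
  intros x y E. apply e_inj, f_inj, E.
Qed.

Definition nat_coding_of_reals (P : (nat -> bool) -> nat -> Prop) : Prop :=
  (forall r, exists k, P r k) /\ (forall r r' k, P r k -> P r' k -> forall n, r n = r' n).

Lemma no_nat_coding_of_reals (P : (nat -> bool) -> nat -> Prop) : ~ nat_coding_of_reals P.
Proof.
  intros [P_total P_unique].
  pose (decode k := epsilon (inhabits (fun _ : nat => false)) (fun r => P r k)).
  pose (diag n := negb (decode n n)).
  destruct (P_total diag) as [k Hk].
  assert (Hdecode : P (decode k) k) by (apply epsilon_spec; exists diag; exact Hk).
  pose proof (P_unique diag (decode k) k Hk Hdecode k) as E.
  unfold diag in E. destruct (decode k k); discriminate.
Qed.

Record coding (I : Type) := Coding {
  member : I -> nat -> bool;
  pair_code : I -> I -> nat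
}.
Arguments Coding {I}.
Arguments member {I}.
Arguments pair_code {I}.

Definition coded_rel {I : Type} (p : coding I) (a b c : nat + I) : Prop :=
  match a, b, c with
  | inl a, inl b, inl c => (a = b /\ c = S a) \/ (a = 0 /\ b = 1 /\ c = 1)
  | inr i, inr j, inr k => i = j /\ j = k
  | inl n, inr i, inl m => n = m /\ member p i n = true
  | inr i, inr j, inl n => i <> j /\ pair_code p i j = n
  | _, _, _ => False
  end.

Definition coded {I : Type} (p : coding I) : tstruct :=
  {| carrier := (nat + I)%type; rel := coded_rel p |}.

Lemma coded_spine_fixed {I I' : Type} (p : coding I) (q : coding I') (e : nat + I -> nat + I') :
  is_embedding (coded p) (coded q) e -> forall n, e (inl n) = inl n.
Proof.
  (* (0, 1, 1) is the only spine triple with distinct first entries, so 0 is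
     fixed; the triples (n, n, n+1) then fix every successor. *)
  intros [e_inj e_rel]. induction n as [|n IH].
  - assert (H : coded_rel q (e (inl 0)) (e (inl 1)) (e (inl 1))) by (apply e_rel; cbn; auto).
    assert (Hne : e (inl 0) <> e (inl 1)) by (intro E; apply e_inj in E; discriminate).
    destruct (e (inl 0)) as [a|a], (e (inl 1)) as [b|b]; cbn in H; try tauto.
    + destruct H as [[E H]|[-> _]]; [lia | reflexivity].
    + destruct H as [-> _]. contradiction.
  - assert (H : coded_rel q (e (inl n)) (e (inl n)) (e (inl (S n)))) by (apply e_rel; cbn; auto).
    rewrite IH in H. destruct (e (inl (S n))) as [c|c]; cbn in H; try tauto.
    destruct H as [[_ ->]|[-> [H _]]]; [reflexivity | discriminate].
Qed.

Lemma coded_loop_is_point {I : Type} (q : coding I) (u : nat + I) :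
  coded_rel q u u u -> exists i, u = inr i.
Proof.
  destruct u as [a|i]; cbn; [|eauto].
  intros [[_ H]|[-> [H _]]]; lia.
Qed.

Lemma coded_point_image {I I' : Type} (p : coding I) (q : coding I') (e : nat + I -> nat + I') :
  is_embedding (coded p) (coded q) e -> forall i, exists j, e (inr i) = inr j.
Proof.
  intros [_ e_rel] i. apply (coded_loop_is_point q), e_rel. cbn. auto.
Qed.

Lemma coded_embeds_reindex {I I' : Type} (p : coding I) (p' : coding I') (phi : I -> I') :
  (forall i j, phi i = phi j -> i = j) ->
  (forall i n, member p' (phi i) n = member p i n) ->
  (forall i j, i <> j -> pair_code p' (phi i) (phi j) = pair_code p i j) ->
  embeds (coded p) (coded p').
Proof.
  intros phi_inj phi_member phi_code.
  exists (fun u => match u with inl n => inl n | inr i => inr (phi i) end). split.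
  - intros [x|x] [y|y] E; inversion E; f_equal; auto.
  - intros [a|a] [b|b] [c|c]; cbn; try tauto.
    + rewrite phi_member. reflexivity.
    + split; intros [Hab Hc].
      * split; [intro E; apply phi_inj in E; contradiction | rewrite phi_code; assumption].
      * assert (a <> b) by (intros ->; contradiction). rewrite <- phi_code; auto.
    + split; intros [E1 E2]; [subst; auto | apply phi_inj in E1, E2; subst; auto].
Qed.

Definition level (c : nat) : nat := fst (Cantor.of_nat c).

Definition at_level (L j : nat) : nat := Cantor.to_nat (L, j).

Lemma level_at_level (L j : nat) : level (at_level L j) = L.
Proof. unfold level, at_level. rewrite Cantor.cancel_of_to. reflexivity. Qed.

Lemma at_level_inj (L j j' : nat) : at_level L j = at_level L j' -> j = j'.
Proof.
  intro E. apply (f_equal Cantor.of_nat) in E. unfold at_level in E.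
  rewrite !Cantor.cancel_of_to in E. congruence.
Qed.

Lemma at_level_neq (c L j : nat) : level c < L -> c <> at_level L j.
Proof. intros Hc ->. rewrite level_at_level in Hc. lia. Qed.

Definition row_injective {I : Type} (p : coding I) : Prop :=
  forall i j j', i <> j -> i <> j' -> pair_code p i j = pair_code p i j' -> j = j'.

Lemma coded_pair_partner_unique {I : Type} (q : coding I) (i j j' : I) (n : nat) :
  row_injective q ->
  coded_rel q (inr i) (inr j) (inl n) -> coded_rel q (inr i) (inr j') (inl n) -> j = j'.
Proof. cbn. intros Hq [Hij E] [Hij' E']. apply (Hq i); congruence. Qed.

Definition levels_below {I : Type} (p : coding I) (L : nat) : Prop :=
  forall i j, level (pair_code p i j) < L.

Definition admissible {I : Type} (p : coding I) : Prop :=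
  card_lt_aleph1 I /\ row_injective p /\ exists L, levels_below p L.

Definition coded_age (B : tstruct) : Prop :=
  exists (I : Type) (p : coding I), admissible p /\ embeds B (coded p).

Definition real_coding (r : nat -> bool) : coding unit := Coding (fun _ n => r n) (fun _ _ => 0).

Lemma admissible_real_coding (r : nat -> bool) : admissible (real_coding r).
Proof.
  split; [|split].
  - exists (fun _ => 0). intros [] [] _. reflexivity.
  - intros [] [] j' Hij. contradiction.
  - exists 1. intros i j. cbn. lia.
Qed.

Definition join_coding {I1 I2 : Type} (p1 : coding I1) (p2 : coding I2)
    (f1 : I1 -> nat) (f2 : I2 -> nat) (L : nat) : coding (I1 + I2) :=
  Coding
    (fun i => match i with inl i => member p1 i | inr i => member p2 i end)
    (fun i j => match i, j with
                | inl i, inl j => pair_code p1 i j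
                | inr i, inr j => pair_code p2 i j
                | inl _, inr j => at_level L (f2 j)
                | inr _, inl j => at_level L (f1 j)
                end).

Section Join.

Variables (I1 I2 : Type) (p1 : coding I1) (p2 : coding I2).
Variables (f1 : I1 -> nat) (f2 : I2 -> nat) (L : nat).

Lemma embeds_join_l : embeds (coded p1) (coded (join_coding p1 p2 f1 f2 L)).
Proof. apply (coded_embeds_reindex _ _ inl); [congruence | intros; reflexivity | intros; reflexivity]. Qed.

Lemma embeds_join_r : embeds (coded p2) (coded (join_coding p1 p2 f1 f2 L)).
Proof. apply (coded_embeds_reindex _ _ inr); [congruence | intros; reflexivity | intros; reflexivity]. Qed.

Hypotheses (p1_below : levels_below p1 L) (p2_below : levels_below p2 L).

Lemma levels_below_join : levels_below (join_coding p1 p2 f1 f2 L) (S L).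
Proof.
  intros [i|i] [j|j]; cbn [join_coding pair_code]; rewrite ?level_at_level;
    [pose proof (p1_below i j) | | | pose proof (p2_below i j)]; lia.
Qed.

Lemma row_injective_join :
  (forall x y, f1 x = f1 y -> x = y) -> (forall x y, f2 x = f2 y -> x = y) ->
  row_injective p1 -> row_injective p2 -> row_injective (join_coding p1 p2 f1 f2 L).
Proof.
  intros f1_inj f2_inj R1 R2 [i|i] [j|j] [j'|j'] Hij Hij' E; cbn [join_coding pair_code] in E.
  - f_equal. apply (R1 i); congruence.
  - destruct (at_level_neq _ _ _ (p1_below i j) E).
  - destruct (at_level_neq _ _ _ (p1_below i j') (eq_sym E)).
  - f_equal. apply f2_inj, (at_level_inj L), E.
  - f_equal. apply f1_inj, (at_level_inj L), E.
  - destruct (at_level_neq _ _ _ (p2_below i j') (eq_sym E)).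
  - destruct (at_level_neq _ _ _ (p2_below i j) E).
  - f_equal. apply (R2 i); congruence.
Qed.

End Join.

Lemma admissible_codings_directed {I1 I2 : Type} (p1 : coding I1) (p2 : coding I2) :
  admissible p1 -> admissible p2 ->
  exists (I : Type) (p : coding I),
    admissible p /\ embeds (coded p1) (coded p) /\ embeds (coded p2) (coded p).
Proof.
  intros ([f1 f1_inj] & R1 & L1 & B1) ([f2 f2_inj] & R2 & L2 & B2).
  assert (B1' : levels_below p1 (L1 + L2)) by (intros i j; specialize (B1 i j); lia).
  assert (B2' : levels_below p2 (L1 + L2)) by (intros i j; specialize (B2 i j); lia).
  exists (I1 + I2)%type, (join_coding p1 p2 f1 f2 (L1 + L2)).
  split; [split; [|split] | split].
  - apply card_lt_aleph1_sum; [exists f1 | exists f2]; assumption.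
  - apply row_injective_join; assumption.
  - exists (S (L1 + L2)). apply levels_below_join; assumption.
  - apply embeds_join_l.
  - apply embeds_join_r.
Qed.

Lemma coded_age_ideal : is_ideal coded_age.
Proof.
  split; [|split; [|split]].
  - intros A B HAB (I & p & Hp & HA). exists I, p. split; [exact Hp|].
    exact (embeds_trans _ _ _ (isomorphic_embeds_sym _ _ HAB) HA).
  - exists (coded (real_coding (fun _ => false))), unit, (real_coding (fun _ => false)).
    split; [apply admissible_real_coding | apply embeds_refl].
  - intros A B HAB (I & p & Hp & HB). exists I, p. split; [exact Hp|].
    exact (embeds_trans _ _ _ HAB HB).
  - intros A B (I1 & p1 & Hp1 & HA) (I2 & p2 & Hp2 & HB).
    destruct (admissible_codings_directed p1 p2 Hp1 Hp2) as (I & p & Hp & E1 & E2).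
    exists (coded p). split; [exists I, p; split; [exact Hp | apply embeds_refl] | split].
    + exact (embeds_trans _ _ _ HA E1).
    + exact (embeds_trans _ _ _ HB E2).
Qed.

Definition discrete (X : Type) : tstruct := {| carrier := X; rel := fun _ _ _ => False |}.

Lemma coded_age_discrete (X : Type) : card_lt_aleph1 X -> coded_age (discrete X).
Proof.
  intros [f f_inj]. exists unit, (real_coding (fun _ => false)).
  split; [apply admissible_real_coding|].
  (* No spine triple lies within the even numbers. *)
  exists (fun x => inl (2 * f x)). split.
  - intros x y E. injection E. intro. apply f_inj. lia.
  - intros a b c. cbn. split; [tauto | lia].
Qed.

Lemma coded_age_aleph1_bounded : aleph1_bounded coded_age.
Proof.
  split; [|split].
  - intros A (I & p & (HI & _) & HA). apply (card_lt_aleph1_embeds _ _ HA).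
    apply card_lt_aleph1_sum; [exists (fun n => n); auto | exact HI].
  - intro n. exists (discrete {k | k < n}). split.
    + apply coded_age_discrete. exists (@proj1_sig _ _). apply proj1_sig_inj.
    + exists (fun u => u). split; [auto | intro k; exists k; reflexivity].
  - exists (discrete nat). split.
    + apply coded_age_discrete. exists (fun n => n). auto.
    + exists (fun n => n). split; [auto | intro k; exists k; reflexivity].
Qed.

Section NotRepresentable.

Variables (M : tstruct) (J : (M -> Prop) -> Prop).
Hypothesis J_directed : forall D1 D2, J D1 -> J D2 ->
  exists D3, J D3 /\ (forall x, D1 x -> D3 x) /\ (forall x, D2 x -> D3 x).
Hypothesis age_J : age_eq M J coded_age.

Definition copy {I : Type} (D : M -> Prop) (p : coding I) (h : nat + I -> M) : Prop :=
  is_embedding (coded p) M h /\ forall u, D (h u).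

Definition chart {I : Type} (D : M -> Prop) (q : coding I) (G : M -> nat + I) : Prop :=
  row_injective q /\
  (forall x y, D x -> D y -> G x = G y -> x = y) /\
  (forall a b c, D a -> D b -> D c -> rel M a b c <-> coded_rel q (G a) (G b) (G c)).

Lemma exists_copy {I : Type} (p : coding I) : admissible p -> exists D h, J D /\ copy D p h.
Proof.
  intros Hp.
  assert (Hage : coded_age (coded p)) by (exists I, p; split; [exact Hp | apply embeds_refl]).
  apply age_J in Hage as (D & HD & f & [f_inj f_rel] & _).
  exists D, (fun u => proj1_sig (f u)). split; [exact HD | split; [split|]].
  - intros u v E. apply f_inj, proj1_sig_inj, E.
  - exact f_rel.
  - intro u. exact (proj2_sig (f u)).
Qed.

Lemma exists_chart (D : M -> Prop) : J D -> exists (I : Type) (q : coding I) G, chart D q G.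
Proof.
  intros HD.
  assert (Hage : coded_age (restrict M D)).
  { apply age_J. exists D. split; [exact HD|].
    exists (fun x => x). split; [split; [auto | reflexivity] | intro y; exists y; reflexivity]. }
  destruct Hage as (I & q & (_ & Hq & _) & g & g_inj & g_rel).
  pose (G x := match excluded_middle_informative (D x) with
               | left H => g (exist _ x H)
               | right _ => inl 0
               end).
  assert (HG : forall x (H : D x), G x = g (exist _ x H)).
  { intros x H. unfold G. destruct (excluded_middle_informative (D x)) as [H'|N].
    - rewrite (proof_irrelevance _ H' H). reflexivity.
    - contradiction. }
  exists I, q, G. split; [exact Hq | split].
  - intros x y Hx Hy E. rewrite (HG x Hx), (HG y Hy) in E.
    exact (f_equal (@proj1_sig _ _) (g_inj _ _ E)).
  - intros a b c Ha Hb Hc. rewrite (HG a Ha), (HG b Hb), (HG c Hc).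
    exact (g_rel (exist _ a Ha) (exist _ b Hb) (exist _ c Hc)).
Qed.

Lemma chart_over (D1 D2 : M -> Prop) : J D1 -> J D2 ->
  exists D (I : Type) (q : coding I) G,
    (forall x, D1 x -> D x) /\ (forall x, D2 x -> D x) /\ chart D q G.
Proof.
  intros HD1 HD2. destruct (J_directed D1 D2 HD1 HD2) as (D & HD & inc1 & inc2).
  destruct (exists_chart D HD) as (I & q & G & HG). exists D, I, q, G. auto.
Qed.

Section ChartOfCopy.

Context {I I' : Type} {D D' : M -> Prop} {p : coding I} {q : coding I'}.
Context {h : nat + I -> M} {G : M -> nat + I'}.
Hypotheses (h_copy : copy D p h) (D_sub : forall x, D x -> D' x) (G_chart : chart D' q G).

Lemma chart_copy_embedding : is_embedding (coded p) (coded q) (fun u => G (h u)).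
Proof.
  destruct h_copy as [[h_inj h_rel] h_in], G_chart as (_ & G_inj & G_rel). split.
  - intros u v E. apply h_inj, G_inj; auto.
  - intros a b c. rewrite h_rel. apply G_rel; auto.
Qed.

Lemma chart_copy_spine (n : nat) : G (h (inl n)) = inl n.
Proof. exact (coded_spine_fixed p q _ chart_copy_embedding n). Qed.

Lemma chart_copy_point (i : I) : exists j, G (h (inr i)) = inr j.
Proof. exact (coded_point_image p q _ chart_copy_embedding i). Qed.

End ChartOfCopy.

Section Origin.

Context {I0 : Type} {p0 : coding I0} {D0 : M -> Prop} {h0 : nat + I0 -> M} (o : I0).
Hypotheses (J_D0 : J D0) (h0_copy : copy D0 p0 h0).

Definition spine (n : nat) : M := h0 (inl n).

Definition origin : M := h0 (inr o).

Lemma copy_spine {I : Type} (D : M -> Prop) (p : coding I) (h : nat + I -> M) :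
  J D -> copy D p h -> forall n, h (inl n) = spine n.
Proof.
  intros HD h_copy n.
  destruct (chart_over D D0 HD J_D0) as (D' & I' & q & G & inc & inc0 & HG).
  pose proof HG as (_ & G_inj & _).
  apply G_inj; [apply inc, h_copy | apply inc0, h0_copy |].
  unfold spine.
  rewrite (chart_copy_spine h_copy inc HG), (chart_copy_spine h0_copy inc0 HG).
  reflexivity.
Qed.

Definition realises (r : nat -> bool) (x : M) : Prop :=
  exists D h, J D /\ copy D (real_coding r) h /\ h (inr tt) = x.

Lemma realises_exists (r : nat -> bool) : exists x, realises r x.
Proof.
  destruct (exists_copy (real_coding r) (admissible_real_coding r)) as (D & h & HD & Hh).
  exists (h (inr tt)), D, h. auto.
Qed.

Lemma realises_member (r : nat -> bool) (x : M) (n : nat) :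
  realises r x -> (r n = true <-> rel M (spine n) x (spine n)).
Proof.
  intros (D & h & HD & h_copy & <-).
  rewrite <- (copy_spine D _ h HD h_copy n), <- (proj2 (proj1 h_copy)).
  cbn. tauto.
Qed.

Lemma realises_unique (r r' : nat -> bool) (x : M) :
  realises r x -> realises r' x -> forall n, r n = r' n.
Proof.
  intros Hr Hr' n. apply eq_true_iff_eq.
  rewrite (realises_member r x n Hr), (realises_member r' x n Hr'). reflexivity.
Qed.

Definition address (x : M) (k : nat) : Prop :=
  (x = origin /\ k = 0) \/
  (x <> origin /\ exists n, k = S n /\ rel M origin x (spine n)).

Lemma realises_address (r : nat -> bool) (x : M) : realises r x -> exists k, address x k.
Proof.
  intros (D & h & HD & h_copy & <-).
  destruct (classic (h (inr tt) = origin)) as [E|NE]; [exists 0; left; auto|].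
  destruct (chart_over D0 D J_D0 HD) as (D' & I & q & G & inc0 & inc & HG).
  pose proof HG as (_ & G_inj & G_rel).
  destruct (chart_copy_point h0_copy inc0 HG o) as [i Ei].
  destruct (chart_copy_point h_copy inc HG tt) as [j Ej].
  exists (S (pair_code q i j)). right. split; [exact NE|].
  exists (pair_code q i j). split; [reflexivity|].
  unfold origin, spine in *.
  apply G_rel; [apply inc0, h0_copy | apply inc, h_copy | apply inc0, h0_copy |].
  rewrite Ei, Ej, (chart_copy_spine h0_copy inc0 HG). cbn.
  split; [|reflexivity].
  intros ->. apply NE, G_inj; [apply inc, h_copy | apply inc0, h0_copy | congruence].
Qed.

Lemma address_injective (r r' : nat -> bool) (x x' : M) (k : nat) :
  realises r x -> realises r' x' -> address x k -> address x' k -> x = x'.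
Proof.
  intros (D & h & HD & h_copy & <-) (D1 & h1 & HD1 & h1_copy & <-) Hk Hk'.
  destruct Hk as [[-> ->]|[_ (n & -> & R)]], Hk' as [[-> E]|[_ (n' & E & R')]];
    try congruence.
  injection E as <-.
  destruct (J_directed D0 D J_D0 HD) as (D2 & HD2 & inc0 & inc).
  destruct (chart_over D2 D1 HD2 HD1) as (D3 & I & q & G & inc2 & inc1 & HG).
  pose proof HG as (Hq & G_inj & G_rel).
  assert (in0 : forall y, D0 y -> D3 y) by auto.
  assert (inD : forall y, D y -> D3 y) by auto.
  destruct (chart_copy_point h0_copy in0 HG o) as [i Ei].
  destruct (chart_copy_point h_copy inD HG tt) as [j Ej].
  destruct (chart_copy_point h1_copy inc1 HG tt) as [j' Ej'].
  pose proof (chart_copy_spine h0_copy in0 HG n) as En.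
  unfold origin, spine in R, R'.
  apply G_rel in R; [|apply in0, h0_copy | apply inD, h_copy | apply in0, h0_copy].
  apply G_rel in R'; [|apply in0, h0_copy | apply inc1, h1_copy | apply in0, h0_copy].
  rewrite Ei, Ej, En in R. rewrite Ei, Ej', En in R'.
  apply G_inj; [apply inD, h_copy | apply inc1, h1_copy |].
  rewrite Ej, Ej', (coded_pair_partner_unique q i j j' n Hq R R'). reflexivity.
Qed.

Lemma nat_coding_of_reals_address :
  nat_coding_of_reals (fun r k => exists x, realises r x /\ address x k).
Proof.
  split.
  - intro r. destruct (realises_exists r) as [x Hx].
    destruct (realises_address r x Hx) as [k Hk]. exists k, x. auto.
  - intros r r' k (x & Hx & Hk) (x' & Hx' & Hk').
    rewrite <- (address_injective r r' x x' k Hx Hx' Hk Hk') in Hx'.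
    exact (realises_unique r r' x Hx Hx').
Qed.

End Origin.

Lemma representation_absurd : False.
Proof.
  destruct (exists_copy _ (admissible_real_coding (fun _ => false))) as (D0 & h0 & J_D0 & h0_copy).
  exact (no_nat_coding_of_reals _ (nat_coding_of_reals_address tt J_D0 h0_copy)).
Qed.

End NotRepresentable.

Lemma coded_age_not_representable : ~ representable coded_age.
Proof.
  intros (M & J & (_ & _ & J_directed) & age_J).
  exact (representation_absurd M J J_directed age_J).
Qed.

Theorem theorem2 :
  exists C : tstruct -> Prop,
    is_ideal C /\ aleph1_bounded C /\ ~ representable C.
Proof.
  exists coded_age. split; [|split].
  - exact coded_age_ideal.
  - exact coded_age_aleph1_bounded.
  - exact coded_age_not_representable.
Qed.
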